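(* Assume the setting below with $Y_i(0)=0$ for all $i$, and let $p^{\mathrm H}_{k,c}=G_{\mathrm H}(n(c);N,N-k,N_1)$ for $0\le k\le N$ and $c\in\mathbb{R}$. (a) $p^{\mathrm H}_{k,c}$ is monotone non-decreasing in $c$ and monotone non-increasing in $k$. (b) Fix $1\le k\le N$ and $\alpha\in(0,1)$. The set $\{c\in\mathbb{R}: p^{\mathrm H}_{k,c}>\alpha\}$ equals $[\,y_{(k(\alpha))},\infty)$, where $$k(\alpha)\equiv N_1-Q_{\mathrm H}(1-\alpha;N,N-k,N_1).$$ Moreover, $\Pr\big(\tau_{(k)}\ge y_{(k(\alpha))}\big)\ge 1-\alpha$. (c) Fix $c\in\mathbb{R}$ and $\alpha\in(0,1)$. The set $\{N-k: p^{\mathrm H}_{k,c}>\alpha,\ 0\le k\le N\}$ equals $\{n_{c,\alpha},n_{c,\alpha}+1,\dots,N\}$, where $$n_{c,\alpha}=N-\max\{k: G_{\mathrm H}(n(c);N,N-k,N_1)>\alpha,\ 0\le k\le N\}.$$ Moreover, this set contains $N(c)$ with probability at least $1-\alpha$.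
   Context: Setting: - There are $N$ units with fixed potential outcomes $Y_i(1),Y_i(0)$ and ITE $\tau_i=Y_i(1)-Y_i(0)$. - The sorted ITEs are $\tau_{(1)}\le\dots\le\tau_{(N)}$. - CRE: the assignment vector $Z\in\{0,1\}^N$ is uniformly distributed over vectors with exactly $N_1$ ones, where $1\le N_1<N$. - The observed outcome is $Y_i=Z_iY_i(1)+(1-Z_i)Y_i(0)$. - $N(c)=\sum_i\mathbb{1}(\tau_i>c)$ and $n(c)=\sum_iZ_i\mathbb{1}(Y_i>c)$. - $G_{\mathrm H}(x;N,n,N_1)=\Pr(X\ge x)$ for $X$ Hypergeometric with parameters $(N,n,N_1)$ (population size $N$, $n$ marked items, sample size $N_1$). - $Q_{\mathrm H}(\theta;N,n,N_1)=\inf\{x:\Pr(X\le x)\ge\theta\}$ is the $\theta$-quantile of that distribution. - $y_{(1)}\le\dots\le y_{(N_1)}$ are the sorted observed outcomes of the treated units ($Z_i=1$), with the convention $y_{(0)}=-\infty$. *)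

(* finite randomization (CRE) as uniform counting over
   subsets Z of 'I_N of size N1 (Z = set of treated units). *)
From mathcomp Require Import all_boot all_order all_algebra.
Set Implicit Arguments.
Unset Strict Implicit.
Unset Printing Implicit Defensive.
Import Order.TTheory GRing.Theory Num.Theory.
Local Open Scope ring_scope.

Definition hyper_pmf {R : realFieldType} (N n N1 j : nat) : R :=
  ('C(n, j) * 'C(N - n, N1 - j))%:R / 'C(N, N1)%:R.

Definition G_H {R : realFieldType} (x N n N1 : nat) : R :=
  \sum_(x <= j < N1.+1) hyper_pmf N n N1 j.

Definition F_H {R : realFieldType} (x N n N1 : nat) : R :=
  \sum_(0 <= j < N1.+1 | (j <= x)%N) hyper_pmf N n N1 j.

(* Q_H(theta; N, n, N1) = inf {x : Pr(X <= x) >= theta}: the least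
   x in 0..N1 with F_H x >= theta (the infimum over reals is attained at
   such an integer since the CDF is a right-continuous step function). *)
Definition Q_H {R : realFieldType} (theta : R) (N n N1 : nat) : nat :=
  find (fun x => theta <= F_H x N n N1) (iota 0 N1.+1).

Definition ite {R : realFieldType} {N : nat} (Y1 Y0 : 'I_N -> R) (i : 'I_N) : R :=
  Y1 i - Y0 i.

Definition Yobs {R : realFieldType} {N : nat} (Y1 Y0 : 'I_N -> R)
  (Z : {set 'I_N}) (i : 'I_N) : R :=
  if i \in Z then Y1 i else Y0 i.

Definition Nc {R : realFieldType} {N : nat} (Y1 Y0 : 'I_N -> R) (c : R) : nat :=
  #|[set i | c < ite Y1 Y0 i]|.

Definition nc {R : realFieldType} {N : nat} (Y1 Y0 : 'I_N -> R)
  (Z : {set 'I_N}) (c : R) : nat :=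
  #|[set i in Z | c < Yobs Y1 Y0 Z i]|.

(* tau_(k), k-th smallest ITE (1-indexed) *)
Definition sorted_ite {R : realFieldType} {N : nat} (Y1 Y0 : 'I_N -> R) (k : nat) : R :=
  nth 0 (sort <=%R [seq ite Y1 Y0 i | i <- enum 'I_N]) k.-1.

Definition treated_sorted {R : realFieldType} {N : nat} (Y1 Y0 : 'I_N -> R)
  (Z : {set 'I_N}) : seq R :=
  sort <=%R [seq Yobs Y1 Y0 Z i | i <- enum Z].

(* ge_yord j c  <->  y_(j) <= c, with the convention y_(0) = -oo *)
Definition ge_yord {R : realFieldType} {N : nat} (Y1 Y0 : 'I_N -> R)
  (Z : {set 'I_N}) (j : nat) (c : R) : bool :=
  if j is 0 then true else nth 0 (treated_sorted Y1 Y0 Z) j.-1 <= c.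

Definition cre_prob {R : realFieldType} {N : nat} (N1 : nat)
  (E : pred {set 'I_N}) : R :=
  #|[set Z : {set 'I_N} | (#|Z| == N1) && E Z]|%:R /
  #|[set Z : {set 'I_N} | #|Z| == N1]|%:R.

Definition pH {R : realFieldType} {N : nat} (Y1 Y0 : 'I_N -> R) (N1 : nat)
  (Z : {set 'I_N}) (k : nat) (c : R) : R :=
  G_H (nc Y1 Y0 Z c) N (N - k) N1.

Definition k_alpha {R : realFieldType} (N N1 k : nat) (alpha : R) : nat :=
  (N1 - Q_H (1 - alpha) N (N - k) N1)%N.

Definition n_calpha {R : realFieldType} {N : nat} (Y1 Y0 : 'I_N -> R) (N1 : nat)
  (Z : {set 'I_N}) (c alpha : R) : nat :=
  (N - \max_(k < N.+1 | (alpha < G_H (nc Y1 Y0 Z c) N (N - k) N1)%R) k)%N.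

From mathcomp Require Import all_boot all_order all_algebra.
From mathcomp Require Import lra zify.
Set Implicit Arguments.
Unset Strict Implicit.
Unset Printing Implicit Defensive.
Import Order.TTheory GRing.Theory Num.Theory.

(* Under the CRE, |Z :&: A| is Hypergeometric(N, #|A|, N1) for any fixed set
   of units A, so G_H and F_H are probabilities of events about |Z :&: A|.
   This gives the monotonicity of (a), and, since Q_H inverts G_H
   (alpha < G_H x iff x <= Q_H (1 - alpha)), the validity
   Pr(alpha < G_H(|Z :&: A|; N, #|A|, N1)) >= 1 - alpha.
   With Y(0) = 0 the treated outcomes are the ITEs, so n(c) = |Z :&: {tau > c}|:
   (c) applies validity to A = {tau > c}, i.e. k = N - N(c), and (b) to
   A = {tau > tau_(k)}, which has at most N - k elements.  The set identities
   hold because n(c) <= Q is the event y_(N1 - Q) <= c on the sorted treated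
   outcomes, and {k | alpha < p_{k,c}} is a down-set containing 0. *)

Lemma card_draws_meet (N N1 j : nat) (A : {set 'I_N}) : j <= N1 ->
  #|[set Z : {set 'I_N} | (#|Z| == N1) && (#|Z :&: A| == j)]| =
  'C(#|A|, j) * 'C(N - #|A|, N1 - j).
Proof.
move=> hj; set T := [set Z : {set 'I_N} | _].
pose split_by_A (Z : {set 'I_N}) := (Z :&: A, Z :&: ~: A).
have split_inj : injective split_by_A.
  move=> Z1 Z2 [h1 h2]; apply/setP => i.
  move/setP: h1 => /(_ i); move/setP: h2 => /(_ i).
  by rewrite !inE; case: (i \in A); rewrite ?andbT ?andbF.
have -> : #|T| = #|split_by_A @: T| by rewrite card_imset.
have -> : split_by_A @: T =
    setX [set S : {set 'I_N} | S \subset A & #|S| == j]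
         [set S : {set 'I_N} | S \subset ~: A & #|S| == N1 - j].
  apply/setP => -[S U]; rewrite !inE /=; apply/imsetP/andP.
  - case=> Z; rewrite inE => /andP[/eqP hZ /eqP hZA] [-> ->].
    by rewrite !subsetIr hZA eqxx -setDE -hZ -(cardsID A Z) hZA addKn eqxx.
  - case=> /andP[hSA /eqP hS] /andP[hUA /eqP hU].
    have dAC : [disjoint A & ~: A] by rewrite disjoints_subset setCK.
    have hSU := disjointWl hSA (disjointWr hUA dAC).
    have hSA' := disjoint_setI0 (disjointWl hSA dAC).
    have hUA' : U :&: A = set0.
      by apply: disjoint_setI0; apply: disjointWl hUA _; rewrite disjoint_sym.
    exists (S :|: U).
      rewrite inE setIUl (setIidPl hSA) hUA' setU0 hS eqxx andbT.
      by rewrite cardsU (disjoint_setI0 hSU) cards0 subn0 hS hU subnKC.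
    by rewrite /split_by_A !setIUl (setIidPl hSA) (setIidPl hUA) hUA' hSA' setU0 set0U.
by rewrite cardsX !cards_draws [#|~: A|]cardsCs setCK card_ord.
Qed.

Lemma card_draws_meet_partition (N N1 : nat) (A : {set 'I_N}) (P : pred nat) :
  \sum_(j < N1.+1 | P j)
     #|[set Z : {set 'I_N} | (#|Z| == N1) && (#|Z :&: A| == j)]| =
  #|[set Z : {set 'I_N} | (#|Z| == N1) && P #|Z :&: A|]|.
Proof.
have meet_small (Z : {set 'I_N}) : #|Z| == N1 -> #|Z :&: A| < N1.+1.
  by move=> /eqP <-; rewrite ltnS subset_leq_card ?subsetIl.
rewrite -sum1_card (partition_big (fun Z => inord #|Z :&: A| : 'I_N1.+1) P) /=.
  apply: eq_bigr => j Pj; rewrite -sum1_card; apply: eq_bigl => Z; rewrite !inE.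
  case hZ: (#|Z| == N1) => //=.
  rewrite -(inj_eq val_inj) /= inordK ?meet_small //.
  by case: eqP => [->|_]; rewrite ?Pj ?andbF.
by move=> Z; rewrite inE => /andP[hZ PZ]; rewrite inordK ?meet_small.
Qed.

Lemma count_enum_set (T : finType) (A : {set T}) (P : pred T) :
  count P (enum A) = #|A :&: [set x | P x]|.
Proof.
rewrite cardE (perm_size (enum_setI _ _)) size_filter.
by apply: eq_count => x; rewrite inE.
Qed.

Lemma count_enum (T : finType) (P : pred T) : count P (enum T) = #|[set x | P x]|.
Proof. by rewrite -(setTI [set x | P x]) -count_enum_set enum_setT enumT. Qed.

Lemma count_le_subn_gt d (T : orderType d) (c : T) (s : seq T) :
  count (fun y => y <= c)%O s = size s - count (fun y => c < y)%O s.
Proof.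
rewrite -(count_predC (fun y => c < y)%O) addKn.
by apply: eq_count => y; rewrite /= leNgt.
Qed.

Lemma sorted_nth_leE d (T : orderType d) (x0 x : T) (s : seq T) (i : nat) :
  sorted <=%O s -> i < size s -> (nth x0 s i <= x)%O = (i < count (<= x)%O s).
Proof.
move=> ss hi; apply/idP/idP => [|/(nth_count_le x0 ss)//].
apply: contraTT; rewrite -leqNgt -ltNge => hc.
by apply: (nth_count_gt _ ss); rewrite hc hi.
Qed.

Lemma complement_downset_max (N m : nat) (P : pred nat) :
  P 0 -> (forall k k', k <= k' -> P k' -> P k) ->
  (exists k, k <= N /\ P k /\ m = N - k) <-> N - \max_(k < N.+1 | P k) k <= m <= N.
Proof.
move=> P0 downP; have [|K PK maxK] := @eq_bigmax_cond _ (fun k : 'I_N.+1 => P k) val.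
  by apply/card_gt0P; exists ord0.
rewrite [\max_(k < N.+1 | P k) k]maxK.
have K_max k : k <= N -> P k -> k <= K.
  by move=> hk Pk; rewrite -maxK (leq_bigmax_cond (Ordinal (hk : k < N.+1))).
split=> [[k [hk [Pk ->]]] | /andP[hm hmN]].
  by rewrite leq_subr leq_sub2l ?K_max.
exists (N - m); rewrite leq_subr subKn //; split=> //; split=> //.
by apply: downP PK; rewrite leq_subCl.
Qed.

Lemma card_ord_prefix (N n : nat) : n <= N -> #|[set i : 'I_N | i < n]| = n.
Proof.
move=> hn; rewrite -sum1_card (eq_bigl (fun i : 'I_N => i < n)) => [|i]; last by rewrite inE.
by rewrite (big_ord_narrow (F := fun _ => 1) hn) sum1_card card_ord.
Qed.

Local Open Scope ring_scope.

Section Randomization.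

Variables (R : realFieldType) (N N1 : nat).

Lemma hyper_pmf_sum (A : {set 'I_N}) (P : pred nat) :
  \sum_(j < N1.+1 | P j) (hyper_pmf N #|A| N1 j : R) =
  cre_prob N1 (fun Z : {set 'I_N} => P #|Z :&: A|).
Proof.
rewrite /hyper_pmf /cre_prob card_draws card_ord -mulr_suml -natr_sum.
rewrite -card_draws_meet_partition; congr (_%:R / _).
by apply: eq_bigr => j _; rewrite card_draws_meet // -ltnS.
Qed.

Lemma G_H_cre_prob (A : {set 'I_N}) (x : nat) :
  (G_H x N #|A| N1 : R) = cre_prob N1 (fun Z : {set 'I_N} => x <= #|Z :&: A|)%N.
Proof. by rewrite /G_H big_geq_mkord (hyper_pmf_sum _ (leq x)). Qed.

Lemma F_H_cre_prob (A : {set 'I_N}) (x : nat) :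
  (F_H x N #|A| N1 : R) = cre_prob N1 (fun Z : {set 'I_N} => #|Z :&: A| <= x)%N.
Proof. by rewrite /F_H big_mkord (hyper_pmf_sum _ (leq^~ x)). Qed.

Lemma cre_prob_le (E E' : pred {set 'I_N}) :
  (forall Z : {set 'I_N}, #|Z| = N1 -> E Z -> E' Z) -> (cre_prob N1 E : R) <= cre_prob N1 E'.
Proof.
move=> EE'; rewrite ler_wpM2r ?invr_ge0 ?ler0n // ler_nat subset_leq_card //.
by apply/subsetP => Z; rewrite !inE => /andP[/eqP hZ /(EE' _ hZ)->]; rewrite hZ eqxx.
Qed.

Lemma eq_cre_prob (E E' : pred {set 'I_N}) :
  (forall Z : {set 'I_N}, #|Z| = N1 -> E Z = E' Z) -> (cre_prob N1 E : R) = cre_prob N1 E'.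
Proof.
by move=> EE'; apply/le_anti; rewrite !cre_prob_le // => Z hZ; rewrite EE'.
Qed.

Hypothesis N1_le_N : (N1 <= N)%N.

Let draws_neq0 : (#|[set Z : {set 'I_N} | #|Z| == N1]|%:R : R) != 0.
Proof. by rewrite card_draws card_ord pnatr_eq0 -lt0n bin_gt0. Qed.

Lemma cre_prob1 (E : pred {set 'I_N}) :
  (forall Z : {set 'I_N}, #|Z| = N1 -> E Z) -> (cre_prob N1 E : R) = 1.
Proof.
move=> hE; rewrite -(divff draws_neq0) /cre_prob; congr (_%:R / _).
by apply: eq_card => Z; rewrite !inE; case: eqP => // /hE ->.
Qed.

Lemma cre_probC (E : pred {set 'I_N}) :
  (cre_prob N1 (fun Z => ~~ E Z) : R) = 1 - cre_prob N1 E.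
Proof.
have split_E : (#|[set Z : {set 'I_N} | (#|Z| == N1) && ~~ E Z]| +
                #|[set Z : {set 'I_N} | (#|Z| == N1) && E Z]|)%N =
               #|[set Z : {set 'I_N} | #|Z| == N1]|.
  rewrite -[RHS](cardsID [set Z | E Z]) addnC.
  by congr (_ + _)%N; apply: eq_card => Z; rewrite !inE andbC.
apply: (mulIf draws_neq0); rewrite /cre_prob mulrBl !divfK // mul1r.
by rewrite -split_E natrD addrK.
Qed.

End Randomization.

Section Hypergeometric.

Variables (R : realFieldType) (N N1 : nat).

Lemma G_H_le_cutoff (n x x' : nat) : (n <= N)%N -> (x' <= x)%N ->
  (G_H x N n N1 : R) <= G_H x' N n N1.
Proof.
(* Realise the n marked units as the prefix [set i | i < n]. *)
move=> hn hx; rewrite -(card_ord_prefix hn) !G_H_cre_prob.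
by apply: cre_prob_le => Z _; apply: leq_trans.
Qed.

Lemma G_H_le_marked (a b x : nat) : (a <= b <= N)%N ->
  (G_H x N a N1 : R) <= G_H x N b N1.
Proof.
case/andP=> hab hb; rewrite -(card_ord_prefix hb) -(card_ord_prefix (leq_trans hab hb)).
rewrite !G_H_cre_prob; apply: cre_prob_le => Z _ /leq_trans; apply.
by apply/subset_leq_card/setIS/subsetP => i; rewrite !inE => /leq_trans; apply.
Qed.

Lemma F_H_le (n y y' : nat) : (n <= N)%N -> (y <= y')%N ->
  (F_H y N n N1 : R) <= F_H y' N n N1.
Proof.
move=> hn hy; rewrite -(card_ord_prefix hn) !F_H_cre_prob.
by apply: cre_prob_le => Z _ /leq_trans; apply.
Qed.

Hypothesis N1_le_N : (N1 <= N)%N.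

Let meet_le_N1 (A Z : {set 'I_N}) : #|Z| = N1 -> (#|Z :&: A| <= N1)%N.
Proof. by move=> <-; rewrite subset_leq_card ?subsetIl. Qed.

Lemma G_H0 (n : nat) : (n <= N)%N -> (G_H 0 N n N1 : R) = 1.
Proof. by move=> hn; rewrite -(card_ord_prefix hn) G_H_cre_prob cre_prob1. Qed.

Lemma F_H_N1 (n : nat) : (n <= N)%N -> (F_H N1 N n N1 : R) = 1.
Proof.
by move=> hn; rewrite -(card_ord_prefix hn) F_H_cre_prob cre_prob1 // => Z /meet_le_N1.
Qed.

Lemma G_H_succ (n x : nat) : (n <= N)%N ->
  (G_H x.+1 N n N1 : R) = 1 - F_H x N n N1.
Proof.
move=> hn; rewrite -(card_ord_prefix hn) G_H_cre_prob F_H_cre_prob -cre_probC //.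
by apply: eq_cre_prob => Z _; rewrite ltnNge.
Qed.

Lemma Q_H_spec (n : nat) (th : R) : (n <= N)%N -> th <= 1 ->
  th <= F_H (Q_H th N n N1) N n N1 /\
  forall y, (y < Q_H th N n N1)%N -> F_H y N n N1 < th.
Proof.
move=> hn th1; have Q_size : (Q_H th N n N1 <= N1.+1)%N.
  by rewrite -[X in (_ <= X)%N](size_iota 0) find_size.
(* [find] returns N1.+1 on failure; [th <= 1 = F_H N1] excludes that. *)
split.
  have hasQ : has (fun y => th <= F_H y N n N1) (iota 0 N1.+1).
    by apply/hasP; exists N1; rewrite ?mem_iota ?F_H_N1 //= add0n.
  have := nth_find 0 hasQ; rewrite has_find size_iota in hasQ.
  by rewrite nth_iota // add0n.
move=> y hy; have := before_find 0 hy.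
rewrite nth_iota ?add0n ?ltNge => [/negbT //|]; exact: leq_trans hy Q_size.
Qed.

Lemma G_H_gt_Q_H (n x : nat) (alpha : R) : (n <= N)%N -> 0 <= alpha < 1 ->
  (alpha < G_H x N n N1) = (x <= Q_H (1 - alpha) N n N1)%N.
Proof.
move=> hn /andP[a0 a1]; have [FQ FltQ] := Q_H_spec (th := 1 - alpha) hn ltac:(lra).
case: x => [|y]; first by rewrite G_H0.
rewrite G_H_succ //; case: ltnP => hy.
  by have := FltQ y hy; lra.
have := F_H_le hn hy; apply: contraTF; lra.
Qed.

Lemma hyper_pvalue_valid (A : {set 'I_N}) (alpha : R) : 0 <= alpha < 1 ->
  1 - alpha <= cre_prob N1 (fun Z : {set 'I_N} => alpha < G_H #|Z :&: A| N #|A| N1).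
Proof.
move=> ha; have hA : (#|A| <= N)%N by rewrite -[X in (_ <= X)%N]card_ord max_card.
have [FQ _] := Q_H_spec (th := 1 - alpha) hA ltac:(case/andP: ha; lra).
apply: le_trans FQ _; rewrite F_H_cre_prob.
by apply: cre_prob_le => Z _; rewrite G_H_gt_Q_H.
Qed.

End Hypergeometric.

Section CompletelyRandomizedExperiment.

Variables (R : realFieldType) (N N1 : nat) (Y1 Y0 : 'I_N -> R).

Lemma nc_treated (Z : {set 'I_N}) (c : R) :
  nc Y1 Y0 Z c = #|Z :&: [set i | c < Y1 i]|.
Proof. by apply: eq_card => i; rewrite !inE /Yobs; case: (i \in Z). Qed.

Lemma nc_le_card (Z : {set 'I_N}) (c : R) : (nc Y1 Y0 Z c <= #|Z|)%N.
Proof. by rewrite nc_treated subset_leq_card ?subsetIl. Qed.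

Lemma nc_le (Z : {set 'I_N}) (c c' : R) : c <= c' -> (nc Y1 Y0 Z c' <= nc Y1 Y0 Z c)%N.
Proof.
move=> hc; rewrite !nc_treated; apply/subset_leq_card/setIS/subsetP => i.
by rewrite !inE; apply: le_lt_trans.
Qed.

Lemma pH_le_c (Z : {set 'I_N}) (k : nat) (c c' : R) :
  c <= c' -> pH Y1 Y0 N1 Z k c <= pH Y1 Y0 N1 Z k c'.
Proof. by move=> hc; apply: G_H_le_cutoff (leq_subr k N) (nc_le Z hc). Qed.

Lemma pH_le_k (Z : {set 'I_N}) (k k' : nat) (c : R) :
  (k <= k')%N -> pH Y1 Y0 N1 Z k' c <= pH Y1 Y0 N1 Z k c.
Proof. by move=> hk; apply: G_H_le_marked; rewrite leq_sub2l ?leq_subr. Qed.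

Lemma count_gt_treated_sorted (Z : {set 'I_N}) (c : R) :
  count (fun y => c < y) (treated_sorted Y1 Y0 Z) = nc Y1 Y0 Z c.
Proof.
rewrite count_sort count_map count_enum_set.
by apply: eq_card => i; rewrite !inE.
Qed.

Lemma card_gt_sorted_ite (k : nat) : (0 < k <= N)%N ->
  (#|[set i | (sorted_ite Y1 Y0 k < ite Y1 Y0 i)%R]| <= N - k)%N.
Proof.
case/andP=> k0 kN; set tau := sorted_ite Y1 Y0 k.
pose t := sort <=%R [seq ite Y1 Y0 i | i <- enum 'I_N].
have t_sorted : sorted <=%R t := sort_sorted le_total _.
have t_size : size t = N by rewrite size_sort size_map size_enum_ord.
have count_t : count (fun y => tau < y) t = #|[set i | tau < ite Y1 Y0 i]|.
  by rewrite count_sort count_map count_enum.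
have := sorted_nth_leE 0 tau t_sorted (i := k.-1).
by rewrite lexx count_le_subn_gt t_size count_t => /(_ ltac:(lia)) /esym; lia.
Qed.

Hypothesis N1_le_N : (N1 <= N)%N.

Lemma pH_gt_ge_yord (Z : {set 'I_N}) (k : nat) (c alpha : R) :
  #|Z| = N1 -> 0 <= alpha < 1 ->
  (alpha < pH Y1 Y0 N1 Z k c) = ge_yord Y1 Y0 Z (k_alpha N N1 k alpha) c.
Proof.
move=> hZ ha; rewrite /pH G_H_gt_Q_H ?leq_subr // /ge_yord /k_alpha.
set Q := Q_H _ _ _ _; have := nc_le_card Z c; rewrite hZ => ncN1.
case hk: (N1 - Q)%N => [|j] /=; first by apply/idP; lia.
have s_size : size (treated_sorted Y1 Y0 Z) = N1.
  by rewrite size_sort size_map -cardE.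
rewrite sorted_nth_leE ?(sort_sorted le_total) ?count_le_subn_gt ?count_gt_treated_sorted
  ?s_size //; [by apply/idP/idP; lia | by lia].
Qed.

Lemma pH_gt_range (Z : {set 'I_N}) (c alpha : R) (m : nat) :
  #|Z| = N1 -> alpha < 1 ->
  (exists k, (k <= N)%N /\ alpha < pH Y1 Y0 N1 Z k c /\ m = (N - k)%N) <->
  (n_calpha Y1 Y0 N1 Z c alpha <= m <= N)%N.
Proof.
move=> hZ a1; apply: (@complement_downset_max N m (fun k => alpha < pH Y1 Y0 N1 Z k c)).
  rewrite /pH subn0 -[X in G_H _ _ X _]card_ord -cardsT G_H_cre_prob cre_prob1 //.
  by move=> Z' hZ'; rewrite setIT hZ' -hZ nc_le_card.
by move=> k k' hk /lt_le_trans; apply; apply: pH_le_k.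
Qed.

Hypothesis Y0_eq0 : forall i, Y0 i = 0.

Lemma nc_ite (Z : {set 'I_N}) (c : R) :
  nc Y1 Y0 Z c = #|Z :&: [set i | c < ite Y1 Y0 i]|.
Proof. by rewrite nc_treated; apply: eq_card => i; rewrite !inE /ite Y0_eq0 subr0. Qed.

Lemma sorted_ite_coverage (k : nat) (alpha : R) : (0 < k <= N)%N -> 0 <= alpha < 1 ->
  1 - alpha <= cre_prob N1 (fun Z : {set 'I_N} =>
    ge_yord Y1 Y0 Z (k_alpha N N1 k alpha) (sorted_ite Y1 Y0 k)).
Proof.
move=> hk ha; set B := [set i | sorted_ite Y1 Y0 k < ite Y1 Y0 i].
apply: le_trans (hyper_pvalue_valid N1_le_N B ha) _.
apply: cre_prob_le => Z hZ pv; rewrite -pH_gt_ge_yord //; apply: lt_le_trans pv _.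
by rewrite /pH nc_ite; apply: G_H_le_marked; rewrite card_gt_sorted_ite ?leq_subr.
Qed.

Lemma Nc_coverage (c alpha : R) : 0 <= alpha < 1 ->
  1 - alpha <= cre_prob N1 (fun Z : {set 'I_N} =>
    [exists k : 'I_N.+1, (alpha < pH Y1 Y0 N1 Z k c) && (Nc Y1 Y0 c == N - k)%N]).
Proof.
move=> ha; set B := [set i | c < ite Y1 Y0 i].
(* The witness is the true k = N - N(c), for which n(c) = |Z :&: B|. *)
have B_le_N : (#|B| <= N)%N by rewrite -[X in (_ <= X)%N]card_ord max_card.
apply: le_trans (hyper_pvalue_valid N1_le_N B ha) _.
apply: cre_prob_le => Z _ pv; apply/existsP; exists (inord (N - #|B|)).
by rewrite inordK ?ltnS ?leq_subr // subKn // /pH subKn // nc_ite pv eqxx.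
Qed.

End CompletelyRandomizedExperiment.

Theorem proposition2 (R : realFieldType) (N N1 : nat) (Y1 Y0 : 'I_N -> R)
  (hN1 : (1 <= N1)%N) (hN1N : (N1 < N)%N) (hY0 : forall i, Y0 i = 0) :
  (* (a) *)
  (forall Z : {set 'I_N}, #|Z| = N1 ->
     (forall (k : nat) (c c' : R), (k <= N)%N -> c <= c' ->
        pH Y1 Y0 N1 Z k c <= pH Y1 Y0 N1 Z k c') /\
     (forall (k k' : nat) (c : R), (k <= k' <= N)%N ->
        pH Y1 Y0 N1 Z k' c <= pH Y1 Y0 N1 Z k c)) /\
  (* (b) *)
  (forall (k : nat) (alpha : R), (1 <= k <= N)%N -> 0 < alpha < 1 ->
     (forall Z : {set 'I_N}, #|Z| = N1 -> forall c : R,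
        alpha < pH Y1 Y0 N1 Z k c <-> ge_yord Y1 Y0 Z (k_alpha N N1 k alpha) c) /\
     1 - alpha <= cre_prob N1 (fun Z : {set 'I_N} =>
        ge_yord Y1 Y0 Z (k_alpha N N1 k alpha) (sorted_ite Y1 Y0 k))) /\
  (* (c) *)
  (forall (c alpha : R), 0 < alpha < 1 ->
     (forall Z : {set 'I_N}, #|Z| = N1 -> forall m : nat,
        (exists k : nat, (k <= N)%N /\ alpha < pH Y1 Y0 N1 Z k c /\ m = (N - k)%N)
        <-> (n_calpha Y1 Y0 N1 Z c alpha <= m <= N)%N) /\
     1 - alpha <= cre_prob N1 (fun Z : {set 'I_N} =>
        [exists k : 'I_N.+1, (alpha < pH Y1 Y0 N1 Z k c) && (Nc Y1 Y0 c == N - k)%N])).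
Proof.
have hN := ltnW hN1N.
have alpha_weak (alpha : R) : 0 < alpha < 1 -> 0 <= alpha < 1.
  by case/andP=> a0 a1; rewrite ltW.
split; [|split].
- move=> Z _; split=> [k c c' _ | k k' c /andP[hk _]].
    exact: pH_le_c.
  exact: pH_le_k.
- move=> k alpha hk ha; split; last exact: sorted_ite_coverage (alpha_weak _ ha).
  by move=> Z hZ c; rewrite pH_gt_ge_yord // alpha_weak.
- move=> c alpha ha; split; last exact: Nc_coverage (alpha_weak _ ha).
  by move=> Z hZ m; apply: pH_gt_range; case/andP: ha.
Qed.
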